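(* Consider an elimination path of length $\ell$ accessed by some set of processes, against any adversary. Then at most one process wins, and in any execution in which at least one process accesses the path and all accessing processes complete, not all of them lose. Moreover, if $k\le\ell$ processes access the elimination path, then no process visits a node with index $j>k$, and no process falls off the path.
   Context: Deterministic splitter: an object with a one-time operation $\mathrm{split}()$ returning $\mathrm{stop}$, $\mathrm{left}$ or $\mathrm{right}$, such that if $m\ge1$ processes call it, at most one stops, at most $m-1$ turn left and at most $m-1$ turn right (so a lone caller stops); moreover a process that stops or turns right invoked $\mathrm{split}()$ before any other $\mathrm{split}()$ call on the same object responded. A 2-process TAS object supports $\mathrm{TAS}(i)$, $i\in\{1,2\}$, called by at most two processes with distinct $i$; it returns $0$ (win) to at most one caller, and to exactly one if both complete (and to a lone caller). Elimination path of length $\ell$: nodes $1,\dots,\ell$, node $i$ holding a deterministic splitter $S_i$ and a 2-process TAS object $T_i$. A process enters at node $1$. At node $i$ it calls $S_i.\mathrm{split}()$: if it turns left it loses and stops; if it turns right it moves to node $i+1$ if $i<\ell$, and falls off the path (taking no more steps in the path) if $i=\ell$; if it stops at $S_i$, it calls $T_i.\mathrm{TAS}(1)$ and then moves back toward node $1$: whenever it has won $T_j$ with $j>1$ it calls $T_{j-1}.\mathrm{TAS}(2)$; if it loses any of these TAS calls it loses. A process wins the elimination path if it wins $T_1$. *)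

(* An asynchronous shared-memory execution of the
   elimination path, modelled at the level of operation invocations and
   responses on the shared objects (splitters S_i, 2-process TAS objects T_i). *)
From mathcomp Require Import all_boot.
Set Implicit Arguments. Unset Strict Implicit. Unset Printing Implicit Defensive.

Inductive call := CSplit of nat | CTAS of nat & nat.
Inductive resp := RStop | RLeft | RRight | RWin | RLose.
Record op := Op { ocall : call; oinv : nat; ores : option (resp * nat) }.

Inductive outcome := Win | Lose | FallOff.
Inductive pstate := AtSplit of nat | AtTAS of nat & nat | Done of outcome.

Definition expected_call_ok (s : pstate) (c : call) : bool :=
  match s, c with
  | AtSplit i, CSplit i' => i == i'
  | AtTAS j a, CTAS j' a' => (j == j') && (a == a')
  | _, _ => false
  end.

Definition step (ell : nat) (s : pstate) (r : resp) : option pstate :=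
  match s, r with
  | AtSplit _, RLeft => Some (Done Lose)
  | AtSplit i, RRight => Some (if i < ell then AtSplit i.+1 else Done FallOff)
  | AtSplit i, RStop => Some (AtTAS i 1)
  | AtTAS j _, RWin => Some (if 1 < j then AtTAS j.-1 2 else Done Win)
  | AtTAS _ _, RLose => Some (Done Lose)
  | _, _ => None
  end.

(* Only the last operation may
   be pending (the state is then the one in which it was invoked). *)
Fixpoint exec (ell : nat) (s : pstate) (ops : seq op) : option pstate :=
  match ops with
  | [::] => Some s
  | o :: rest =>
      if expected_call_ok s (ocall o) then
        match ores o with
        | None => if rest is [::] then Some s else None
        | Some (r, _) =>
            match step ell s r with
            | Some s' => exec ell s' rest
            | None => None
            end
        end
      else None
  end.

Fixpoint run_timed (ops : seq op) : bool :=
  match ops with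
  | [::] => true
  | o :: rest =>
      match ores o with
      | None => if rest is [::] then true else false
      | Some (_, t) =>
          [&& oinv o < t,
              (if rest is o' :: _ then t < oinv o' else true) & run_timed rest]
      end
  end.

Definition times_of (o : op) : seq nat :=
  oinv o :: (if ores o is Some (_, t) then [:: t] else [::]).

Definition all_ops (P : finType) (run : P -> seq op) : seq op :=
  flatten [seq run p | p <- enum P].

Definition is_stop (r : resp) := if r is RStop then true else false.
Definition is_left (r : resp) := if r is RLeft then true else false.
Definition is_right (r : resp) := if r is RRight then true else false.
Definition is_win (r : resp) := if r is RWin then true else false.

Definition responded (o : op) : bool := if ores o is Some _ then true else false.
Definition responded_with (f : resp -> bool) (o : op) : bool :=
  if ores o is Some (r, _) then f r else false.

Definition is_split_on (i : nat) (o : op) : bool :=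
  if ocall o is CSplit i' then i' == i else false.
Definition is_tas_on (j : nat) (o : op) : bool :=
  if ocall o is CTAS j' _ then j' == j else false.
Definition tas_arg (o : op) : nat := if ocall o is CTAS _ a then a else 0.
Definition call_node (c : call) : nat :=
  match c with CSplit i => i | CTAS j _ => j end.

Definition op0 : op := Op (CSplit 0) 0 None.

Definition splitter_spec (ops : seq op) (i : nat) : Prop :=
  let cs := filter (is_split_on i) ops in
  [/\ count (responded_with is_stop) cs <= 1,
      count (responded_with is_left) cs <= (size cs).-1,
      count (responded_with is_right) cs <= (size cs).-1 &
      forall a b, a < size cs -> b < size cs -> a != b ->
        responded_with (fun r => is_stop r || is_right r) (nth op0 cs a) ->
        forall r t, ores (nth op0 cs b) = Some (r, t) ->
          oinv (nth op0 cs a) < t].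

Definition tas_spec (ops : seq op) (j : nat) : Prop :=
  let cs := filter (is_tas_on j) ops in
  [&& size cs <= 2, uniq (map tas_arg cs) & all (fun o => tas_arg o \in [:: 1; 2]) cs] ->
  count (responded_with is_win) cs <= 1 /\
  (0 < size cs -> all responded cs -> count (responded_with is_win) cs = 1).

Definition valid_execution (P : finType) (ell : nat) (run : P -> seq op) : Prop :=
  [/\ forall p, exec ell (AtSplit 1) (run p) <> None,
      forall p, run_timed (run p),
      uniq (flatten (map times_of (all_ops run))),
      forall i, 1 <= i <= ell -> splitter_spec (all_ops run) i &
      forall j, 1 <= j <= ell -> tas_spec (all_ops run) j].

Definition accesses (P : finType) (run : P -> seq op) (p : P) : bool :=
  0 < size (run p).

Definition final_is (ell : nat) (ops : seq op) (x : outcome) : bool :=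
  match exec ell (AtSplit 1) ops, x with
  | Some (Done Win), Win | Some (Done Lose), Lose
  | Some (Done FallOff), FallOff => true
  | _, _ => false
  end.

Definition wins ell ops := final_is ell ops Win.
Definition loses ell ops := final_is ell ops Lose.
Definition falls_off ell ops := final_is ell ops FallOff.
Definition completes ell ops := [|| wins ell ops, loses ell ops | falls_off ell ops].

Definition visits (ops : seq op) (j : nat) : bool :=
  has (fun o => call_node (ocall o) == j) ops.

(* Every operation [o] of a conforming run is invoked in the control state
   [inv_state o] determined by its call, and (if it responded) moves the
   process to [post_state o].  For any predicate [f] on control states this
   gives a conservation law along a run (exec_flow): the operations invoked
   in an [f]-state are matched by the operations whose response enters an
   [f]-state, up to the initial and final states.  Instantiating [f] with
   "at splitter S_i", "at T_j with argument a", "won" and "fell off", and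
   summing over the processes, turns the algorithm into inequalities
   between global counts of operations, e.g.
     #calls of S_(i+1) <= #right turns at S_i,
     #TAS(1) on T_j <= #stops at S_j,   #TAS(2) on T_j <= #wins at T_(j+1).
   Combined with the splitter and TAS specifications these give, by
   downward induction on nodes, that every T_j is used within its
   precondition and has at most one winner (hence at most one process wins
   the path); that with k accessing processes at most k - i + 1 of them
   reach S_i (hence nobody goes beyond node k, and nobody falls off when
   k <= ell); and that if every accessing process lost (which already
   implies that it completed), no splitter could ever have been called. *)
From Pilot Require Import Defs.
From mathcomp Require Import all_boot zify.
Set Implicit Arguments. Unset Strict Implicit. Unset Printing Implicit Defensive.

Definition state_of_call (c : call) : pstate :=
  match c with CSplit i => AtSplit i | CTAS j a => AtTAS j a end.

Definition inv_state (o : op) : pstate := state_of_call (ocall o).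

Definition post_state (ell : nat) (o : op) : option pstate :=
  if ores o is Some (r, _) then step ell (inv_state o) r else None.

Definition enters (ell : nat) (f : pstate -> bool) (o : op) : bool :=
  if post_state ell o is Some s' then f s' else false.

Lemma expected_call_state s c : expected_call_ok s c -> s = state_of_call c.
Proof. by case: s c => [i|j a|x] [i'|j' a'] //= => [/eqP->|/andP[/eqP-> /eqP->]]. Qed.

(* Conservation law along a run from [s] to [sf]: the visits of [f]-states
   (operations invoked there, plus the final state if no operation is
   pending) equal the entries into [f]-states plus the initial state. *)
Lemma exec_flow ell (f : pstate -> bool) ops s sf : exec ell s ops = Some sf ->
  count (f \o inv_state) ops + (f sf && all responded ops) = f s + count (enters ell f) ops.
Proof.
elim: ops s => [|o rest IH] s /=; first by case=> ->; rewrite andbT addn0.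
case: ifP => // /expected_call_state Es.
rewrite {1}/enters /post_state {1}/responded -[inv_state o]/(state_of_call (ocall o)) -Es.
case: (ores o) => [[r t]|].
- by case: (step ell s r) => [s'|//] /IH <-; rewrite addnA.
- by case: rest {IH} => // -[<-]; rewrite /= andbF !addn0.
Qed.

Lemma exec_flow_le ell (f : pstate -> bool) ops s : exec ell s ops <> None ->
  count (f \o inv_state) ops <= f s + count (enters ell f) ops.
Proof. by case E: exec => [sf|//] _; rewrite -(exec_flow f E) leq_addr. Qed.

Lemma exec_done_responded ell ops s x : exec ell s ops = Some (Done x) -> all responded ops.
Proof.
elim: ops s => [//|o rest IH] s /=; case: ifP => // /expected_call_state ->.
rewrite /(responded o); case: (ores o) => [[r t]|].
- by case: step => [s'|//] /IH.
- by case: rest {IH} => //; case: (ocall o).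
Qed.

Lemma exec_done_entered ell (f : pstate -> bool) ops s x :
  f \o inv_state =1 pred0 -> exec ell s ops = Some (Done x) -> f (Done x) ->
  f s + count (enters ell f) ops = 1.
Proof.
move=> never E fx; rewrite -(exec_flow f E) (eq_count never) count_pred0.
by rewrite fx (exec_done_responded E).
Qed.

Lemma exec_answers ell s ops : exec ell s ops <> None ->
  all (fun o => responded o ==> isSome (post_state ell o)) ops.
Proof.
elim: ops s => [//|o rest IH] s /=; case: ifP => // /expected_call_state Es.
rewrite /post_state /responded -[inv_state o]/(state_of_call (ocall o)) -Es.
case: (ores o) => [[r t]|]; last by case: rest {IH}.
by case: (step ell s r) => [s'|//] /IH.
Qed.

Lemma exec_first_split ell ops : exec ell (AtSplit 1) ops <> None -> 0 < size ops ->
  has (is_split_on 1) ops.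
Proof.
case: ops => [//|[[i|j a] t r] rest] /=; rewrite /is_split_on //=.
by case: eqP => [<-|].
Qed.

Lemma final_isE ell ops x : final_is ell ops x -> exec ell (AtSplit 1) ops = Some (Done x).
Proof. by rewrite /final_is; case: exec => [[||[]]|]; case: x. Qed.

Definition good_state (ell : nat) (s : pstate) : bool :=
  match s with
  | AtSplit i => 0 < i <= ell
  | AtTAS j a => (0 < j <= ell) && (a \in [:: 1; 2])
  | Done _ => true
  end.

Lemma step_good ell s r s' : good_state ell s -> step ell s r = Some s' -> good_state ell s'.
Proof.
case: s => [i|j a|x]; case: r => //= + [<-] //=; rewrite ?inE.
- by move=> ->.
- by case: ifP => //= *; lia.
- by case: ifP => //= *; rewrite !inE; lia.
Qed.

Lemma exec_good ell s ops : good_state ell s -> exec ell s ops <> None ->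
  all (fun o => good_state ell (inv_state o)) ops.
Proof.
elim: ops s => [//|o rest IH] s gs /=.
case: ifP => // /expected_call_state Es; rewrite /inv_state -Es gs /=.
case: (ores o) => [[r t]|]; last by case: rest {IH}.
by case S: (step ell s r) => [s'|//]; apply: IH (step_good gs S).
Qed.

Lemma good_node ell o : good_state ell (inv_state o) -> 0 < call_node (ocall o) <= ell.
Proof. by case: o => [[i|j a] t r] //= /andP[]. Qed.

Lemma good_tas_arg ell o : good_state ell (inv_state o) -> is_tas_on (call_node (ocall o)) o ->
  tas_arg o \in [:: 1; 2].
Proof. by case: o => [[i|j a] t r] //= /andP[]. Qed.

Definition at_split (i : nat) (s : pstate) : bool :=
  if s is AtSplit i' then i' == i else false.
Definition at_tas (j a : nat) (s : pstate) : bool :=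
  if s is AtTAS j' a' then (j' == j) && (a' == a) else false.
Definition won (s : pstate) : bool := if s is Done Win then true else false.
Definition fell (s : pstate) : bool := if s is Done FallOff then true else false.

Definition split_resp (i : nat) (f : resp -> bool) (o : op) : bool :=
  responded_with f o && is_split_on i o.
Definition win_at (j : nat) (o : op) : bool := responded_with is_win o && is_tas_on j o.
Definition tas_call (j a : nat) (o : op) : bool := is_tas_on j o && (tas_arg o == a).
Definition at_node (j : nat) (o : op) : bool := call_node (ocall o) == j.

Lemma split_on_node i o : is_split_on i o -> call_node (ocall o) = i.
Proof. by case: o => [[i'|j a] t r] //= /eqP. Qed.

Lemma tas_on_node j o : is_tas_on j o -> call_node (ocall o) = j.
Proof. by case: o => [[i|j' a] t r] //= /eqP. Qed.

Lemma at_node_split_tas j o : at_node j o -> is_split_on j o || is_tas_on j o.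
Proof.
by case: o => [[i|j' a] t r]; rewrite /at_node /is_split_on /is_tas_on /= => ->; rewrite ?orbT.
Qed.

Lemma inv_at_split i : at_split i \o inv_state =1 is_split_on i.
Proof. by move=> [[]]. Qed.

Lemma inv_at_tas j a : at_tas j a \o inv_state =1 tas_call j a.
Proof. by move=> [[]]. Qed.

Lemma inv_won : won \o inv_state =1 pred0.
Proof. by move=> [[]]. Qed.

Lemma inv_fell : fell \o inv_state =1 pred0.
Proof. by move=> [[]]. Qed.

Lemma enters_split ell i :
  enters ell (at_split i.+1) =1 (fun o => (i < ell) && split_resp i is_right o).
Proof.
move=> [[i'|j' a] t [[[] t']|]]; rewrite /enters /post_state /split_resp /is_split_on /=.
all: rewrite ?andbF ?andbT //; case: ifP => /= *; lia.
Qed.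

Lemma enters_tas1 ell j : enters ell (at_tas j 1) =1 split_resp j is_stop.
Proof.
move=> [[i'|j' a] t [[[] t']|]]; rewrite /enters /post_state /split_resp /is_split_on //=.
all: rewrite ?andbF ?andbT //; case: ifP => /= *; lia.
Qed.

Lemma enters_tas2 ell j : enters ell (at_tas j.+1 2) =1 win_at j.+2.
Proof.
move=> [[i'|j' a] t [[[] t']|]]; rewrite /enters /post_state /win_at /is_tas_on //=.
all: rewrite ?andbF ?andbT //; case: ifP => /= *; lia.
Qed.

Lemma enters_won ell o : good_state ell (inv_state o) -> enters ell won o = win_at 1 o.
Proof.
case: o => [[i'|j' a] t [[[] t']|]]; rewrite /enters /post_state /win_at /is_tas_on //=.
all: rewrite ?andbF ?andbT //; case: ifP => /= *; lia.
Qed.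

Lemma enters_fell ell o : good_state ell (inv_state o) -> enters ell fell o = split_resp ell is_right o.
Proof.
case: o => [[i'|j' a] t [[[] t']|]]; rewrite /enters /post_state /split_resp /is_split_on //=.
all: rewrite ?andbF ?andbT //; case: ifP => /= *; lia.
Qed.

Lemma split_count_by_response ell i (s : seq op) :
  all (fun o => isSome (post_state ell o)) s ->
  count (is_split_on i) s = count (split_resp i is_stop) s
    + count (split_resp i Defs.is_left) s + count (split_resp i is_right) s.
Proof.
elim: s => //= o s IH /andP[+ /IH->]; rewrite /post_state /split_resp.
by case: o => [[i'|j a] t [[[] t']|]] //=; case: (i' == i) => /=; lia.
Qed.

Lemma count_le_all (T : Type) (g a b : pred T) s :
  all g s -> (forall x, g x -> a x -> b x) -> count a s <= count b s.
Proof.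
move=> + sub; elim: s => //= x s IH /andP[gx /IH le_s].
by apply: leq_add le_s; case: (a x) (sub x gx) => // ->.
Qed.

Definition tas_pre (cs : seq op) : bool :=
  [&& size cs <= 2, uniq (map tas_arg cs) & all (fun o => tas_arg o \in [:: 1; 2]) cs].

Lemma size_args12 (s : seq nat) : all (mem [:: 1; 2]) s -> size s = count_mem 1 s + count_mem 2 s.
Proof. by elim: s => //= x s IH /andP[+ /IH->]; rewrite !inE => /orP[]/eqP-> /=; lia. Qed.

Lemma uniq_args12 (s : seq nat) : all (mem [:: 1; 2]) s ->
  count_mem 1 s <= 1 -> count_mem 2 s <= 1 -> uniq s.
Proof.
elim: s => //= x s IH /andP[x12 s12] c1 c2; apply/andP; split; last by apply: IH; lia.
by apply/count_memPn; move: x12 c1 c2; rewrite !inE => /orP[]/eqP-> /=; lia.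
Qed.

Lemma tas_pre_of_counts (cs : seq op) : all (fun o => tas_arg o \in [:: 1; 2]) cs ->
  count (fun o => tas_arg o == 1) cs <= 1 -> count (fun o => tas_arg o == 2) cs <= 1 ->
  tas_pre cs.
Proof.
rewrite /tas_pre -(size_map tas_arg) -(all_map tas_arg (mem [:: 1; 2])) => args c1 c2.
rewrite -(count_map tas_arg (pred1 1)) in c1; rewrite -(count_map tas_arg (pred1 2)) in c2.
by rewrite args uniq_args12 // size_args12 // !andbT (leq_add c1 c2).
Qed.

Section Execution.
Variables (P : finType) (ell : nat) (run : P -> seq op).
Hypothesis ell_gt0 : 0 < ell.
Hypothesis conforming : forall p, exec ell (AtSplit 1) (run p) <> None.

Local Notation ops := (all_ops run).
Local Notation accessors := #|[pred p | accesses run p]|.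

Lemma count_all_ops (a : pred op) : count a ops = \sum_p count a (run p).
Proof. by rewrite /all_ops count_flatten -map_comp sumnE big_map big_enum. Qed.

Lemma count_run_le (a : pred op) p : count a (run p) <= count a ops.
Proof. by rewrite count_all_ops (bigD1 p) //= leq_addr. Qed.

Lemma run_nil p : ~~ accesses run p -> run p = [::].
Proof. by rewrite /accesses; case: (run p). Qed.

Lemma all_ops_all (a : pred op) : (forall p, all a (run p)) -> all a ops.
Proof.
by move=> all_a; rewrite /all_ops; elim: (enum P) => [//|p ps IH] /=; rewrite all_cat IH all_a.
Qed.

Lemma run_good p : all (fun o => good_state ell (inv_state o)) (run p).
Proof.
have start_good : good_state ell (AtSplit 1) by rewrite /= ell_gt0.
exact: exec_good start_good (@conforming p).
Qed.

Lemma count_good_le (a b : pred op) :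
  (forall o, good_state ell (inv_state o) -> a o -> b o) -> count a ops <= count b ops.
Proof. exact: count_le_all (all_ops_all run_good). Qed.

Lemma node_outside j : ~~ (0 < j <= ell) -> count (at_node j) ops = 0.
Proof.
move=> j_out; apply/eqP; rewrite -leqn0 -(count_pred0 ops).
apply: count_good_le => o /good_node; rewrite /at_node.
by case: eqP => // ->; rewrite (negbTE j_out).
Qed.

Lemma count_node_le (a : pred op) j :
  (forall o, a o -> call_node (ocall o) = j) -> count a ops <= count (at_node j) ops.
Proof. by move=> on_j; apply: sub_count => o /on_j; rewrite /at_node => ->. Qed.

Lemma count_flow_le (f : pstate -> bool) :
  count (f \o inv_state) ops <= f (AtSplit 1) * accessors + count (enters ell f) ops.
Proof.
rewrite !count_all_ops -sum1_card big_distrr [\sum_(i in _) _]big_mkcond -big_split /=.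
apply: leq_sum => p _; rewrite inE; case: (boolP (accesses run p)) => [_|/run_nil-> //].
by rewrite muln1 (exec_flow_le _ (@conforming p)).
Qed.

Lemma split1_le : count (is_split_on 1) ops <= accessors.
Proof.
have := count_flow_le (at_split 1); rewrite (eq_count (inv_at_split 1)) /= mul1n.
suff -> : count (enters ell (at_split 1)) ops = 0 by rewrite addn0.
apply/eqP; rewrite -leqn0 -[X in _ <= X](node_outside (j := 0)) //.
by apply: count_node_le => o; rewrite enters_split => /andP[_ /andP[_ /split_on_node]].
Qed.

Lemma split_succ_le i : 0 < i -> count (is_split_on i.+1) ops <= count (split_resp i is_right) ops.
Proof.
case: i => // i _; have := count_flow_le (at_split i.+2).
rewrite (eq_count (inv_at_split _)) (eq_count (enters_split ell i.+1)) /= => /leq_trans; apply.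
by apply: sub_count => o /andP[].
Qed.

Lemma tas1_le j : count (tas_call j 1) ops <= count (split_resp j is_stop) ops.
Proof.
have := count_flow_le (at_tas j 1).
by rewrite (eq_count (inv_at_tas j 1)) (eq_count (enters_tas1 ell j)).
Qed.

Lemma tas2_le j : count (tas_call j.+1 2) ops <= count (win_at j.+2) ops.
Proof.
have := count_flow_le (at_tas j.+1 2).
by rewrite (eq_count (inv_at_tas _ _)) (eq_count (enters_tas2 ell j)).
Qed.

Lemma tas_count_le j :
  count (is_tas_on j) ops <= count (tas_call j 1) ops + count (tas_call j 2) ops.
Proof.
rewrite -count_predUI; apply: leq_trans (leq_addr _ _); apply: count_good_le => o good T.
have := good_tas_arg good; rewrite (tas_on_node T) => /(_ T).
by rewrite !inE /= /tas_call T.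
Qed.

Lemma tas_step_le j : 0 < j ->
  count (is_tas_on j) ops <= count (is_split_on j) ops + count (is_tas_on j.+1) ops.
Proof.
case: j => // j _; apply: leq_trans (tas_count_le _) _; apply: leq_add.
- by apply: leq_trans (tas1_le _) _; apply: sub_count => o /andP[].
- by apply: leq_trans (tas2_le _) _; apply: sub_count => o /andP[].
Qed.

Hypothesis splitters : forall i, 1 <= i <= ell -> splitter_spec ops i.

Lemma stop_le1 i : 0 < i <= ell -> count (split_resp i is_stop) ops <= 1.
Proof. by case/splitters => stop _ _ _; rewrite count_filter in stop. Qed.

Lemma left_le i : 0 < i <= ell ->
  count (split_resp i Defs.is_left) ops <= (count (is_split_on i) ops).-1.
Proof. by case/splitters => _ left _ _; rewrite count_filter size_filter in left. Qed.

Lemma right_le i : 0 < i <= ell ->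
  count (split_resp i is_right) ops <= (count (is_split_on i) ops).-1.
Proof. by case/splitters => _ _ right _; rewrite count_filter size_filter in right. Qed.

(* Each right turn loses a process: at most k - i + 1 processes call S_i. *)
Lemma split_le_crowd i : 0 < i <= ell -> count (is_split_on i) ops <= accessors - i.-1.
Proof.
elim: i => [//|[|i] IH] range; first by rewrite subn0 split1_le.
have := IH ltac:(lia); have := right_le (i := i.+1) ltac:(lia).
have := split_succ_le (i := i.+1) isT; lia.
Qed.

Lemma split_free_above j : accessors < j -> count (is_split_on j) ops = 0.
Proof.
move=> crowd; case: (boolP (0 < j <= ell)) => [range|/node_outside out].
- by have := split_le_crowd range; lia.
- by apply/eqP; rewrite -leqn0 -out; apply: count_node_le => o /split_on_node.
Qed.

Lemma tas_free_above j : accessors < j -> count (is_tas_on j) ops = 0.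
Proof.
suff bound d : forall j, accessors < j -> ell < j + d -> count (is_tas_on j) ops = 0.
  by move=> crowd; apply: (bound ell.+1) => //; rewrite addnS ltnS leq_addl.
elim: d => [|d IH] {}j crowd lt.
- apply/eqP; rewrite -leqn0 -(node_outside (j := j)); last by move: lt; rewrite addn0; lia.
  by apply: count_node_le => o /tas_on_node.
- have := tas_step_le (j := j) ltac:(lia).
  by rewrite split_free_above // (IH j.+1) ?addSnnS //; lia.
Qed.

Lemma visits_le_accessors p j : visits (run p) j -> j <= accessors.
Proof.
rewrite /visits has_count => /leq_trans/(_ (count_run_le (at_node j) p)) visited.
have node_le : count (at_node j) ops <= count (is_split_on j) ops + count (is_tas_on j) ops.
  rewrite -count_predUI; apply: leq_trans (leq_addr _ _).
  by apply: sub_count => o /at_node_split_tas.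
rewrite leqNgt; apply/negP => crowd.
by move: node_le; rewrite split_free_above // tas_free_above //; lia.
Qed.

Lemma faller_right_last p : falls_off ell (run p) -> 0 < count (split_resp ell is_right) (run p).
Proof.
move/final_isE => E; have := exec_done_entered inv_fell E isT; rewrite /= add0n => one_enters.
apply: leq_trans (count_le_all (a := enters ell fell) (run_good p) _); first by rewrite one_enters.
by move=> o /enters_fell->.
Qed.

Lemma no_falloff p : accessors <= ell -> ~~ falls_off ell (run p).
Proof.
move=> few; apply/negP => /faller_right_last /leq_trans /(_ (count_run_le _ p)).
have := right_le (i := ell) ltac:(lia); have := split_le_crowd (i := ell) ltac:(lia); lia.
Qed.

Hypothesis tas_objects : forall j, 1 <= j <= ell -> tas_spec ops j.

Lemma tas_pre_at j : 0 < j <= ell -> count (win_at j.+1) ops <= 1 ->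
  tas_pre (filter (is_tas_on j) ops).
Proof.
move=> j_range wins_above; apply: tas_pre_of_counts.
- rewrite all_filter; apply: sub_all (all_ops_all run_good) => o good; apply/implyP => T.
  by have := good_tas_arg good; rewrite (tas_on_node T); apply.
- rewrite count_filter; apply: leq_trans (stop_le1 j_range).
  by apply: leq_trans (tas1_le j); apply: sub_count => o /andP[arg T]; apply/andP.
- rewrite count_filter; case: j j_range wins_above => // j _ wins_above.
  apply: leq_trans wins_above; apply: leq_trans (tas2_le j).
  by apply: sub_count => o /andP[arg T]; apply/andP.
Qed.

Lemma win_outside j : ~~ (0 < j <= ell) -> count (win_at j) ops = 0.
Proof.
move=> j_out; apply/eqP; rewrite -leqn0 -(node_outside j_out).
by apply: count_node_le => o /andP[_ /tas_on_node].
Qed.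

Lemma win_le1 j : count (win_at j) ops <= 1.
Proof.
suff bound d : forall j, ell < j + d -> count (win_at j) ops <= 1.
  by apply: (bound ell.+1); rewrite addnS ltnS leq_addl.
elim: d => [|d IH] {}j lt; case: (boolP (0 < j <= ell)) => [j_range|/win_outside-> //].
- by move: lt j_range; rewrite addn0; lia.
- have wins_above : count (win_at j.+1) ops <= 1 by apply: IH; rewrite addSnnS.
  have [le1 _] := tas_objects j_range (tas_pre_at j_range wins_above).
  by rewrite count_filter in le1.
Qed.

Lemma winner_wins_T1 p : wins ell (run p) -> 0 < count (win_at 1) (run p).
Proof.
move/final_isE => E; have := exec_done_entered inv_won E isT; rewrite /= add0n => one_enters.
apply: leq_trans (count_le_all (a := enters ell won) (run_good p) _); first by rewrite one_enters.
by move=> o /enters_won->.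
Qed.

Lemma winners_le1 : #|[pred p | wins ell (run p)]| <= 1.
Proof.
apply: leq_trans (win_le1 1); rewrite count_all_ops -sum1_card [\sum_(p in _) _]big_mkcond /=.
by apply: leq_sum => p _; rewrite inE; case: ifP => // /winner_wins_T1.
Qed.

Section AllLose.
Hypothesis all_lose : forall p, accesses run p -> exec ell (AtSplit 1) (run p) = Some (Done Lose).

Lemma all_ops_answered : all (fun o => isSome (post_state ell o)) ops.
Proof.
apply: all_ops_all => p; case: (boolP (accesses run p)) => [acc|/run_nil-> //].
move: (exec_done_responded (all_lose acc)) (exec_answers (@conforming p)).
by elim: (run p) => //= o s IH /andP[-> /IH{}IH] /andP[/= -> /IH].
Qed.

(* Every process starts and ends outside [f]: visits and entries balance exactly. *)
Lemma conservation (f : pstate -> bool) : f (AtSplit 1) = false -> f (Done Lose) = false ->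
  count (f \o inv_state) ops = count (enters ell f) ops.
Proof.
move=> f_start f_end; rewrite !count_all_ops; apply: eq_bigr => p _.
case: (boolP (accesses run p)) => [acc|/run_nil-> //].
by have := exec_flow f (all_lose acc); rewrite f_start f_end addn0.
Qed.

Lemma no_win_T1 : count (win_at 1) ops = 0.
Proof.
have := conservation (f := won) erefl erefl; rewrite (eq_count inv_won) count_pred0 => none.
by apply/eqP; rewrite -leqn0 [X in _ <= X]none; apply: count_good_le => o /enters_won->.
Qed.

Lemma no_right_last : count (split_resp ell is_right) ops = 0.
Proof.
have := conservation (f := fell) erefl erefl; rewrite (eq_count inv_fell) count_pred0 => none.
by apply/eqP; rewrite -leqn0 [X in _ <= X]none; apply: count_good_le => o /enters_fell->.
Qed.

Lemma stop_le_tas i : count (split_resp i is_stop) ops <= count (is_tas_on i) ops.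
Proof.
have := conservation (f := at_tas i 1) erefl erefl.
rewrite (eq_count (inv_at_tas _ _)) (eq_count (enters_tas1 _ _)) => <-.
by apply: sub_count => o /andP[].
Qed.

Lemma win_le_tas j : count (win_at j.+2) ops <= count (is_tas_on j.+1) ops.
Proof.
have := conservation (f := at_tas j.+1 2) erefl erefl.
rewrite (eq_count (inv_at_tas _ _)) (eq_count (enters_tas2 _ _)) => <-.
by apply: sub_count => o /andP[].
Qed.

Lemma right_le_next i : 0 < i < ell ->
  count (split_resp i is_right) ops <= count (is_split_on i.+1) ops.
Proof.
case: i => // i /andP[_ lt]; have := conservation (f := at_split i.+2) erefl erefl.
by rewrite (eq_count (inv_at_split _)) (eq_count (enters_split _ _)) lt => ->.
Qed.

(* All calls completed, so a used T_j has exactly one winner. *)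
Lemma tas_completes j : 0 < j <= ell -> 0 < count (is_tas_on j) ops -> count (win_at j) ops = 1.
Proof.
move=> range called; have [_ complete] := tas_objects range (tas_pre_at range (win_le1 _)).
rewrite count_filter in complete; apply: complete; first by rewrite size_filter.
rewrite all_filter; apply: sub_all all_ops_answered => o; rewrite /post_state /responded /=.
by case: (ores o) => [[r t]|] // _; rewrite implybT.
Qed.

Lemma split_progress i : 0 < i <= ell -> 0 < count (is_split_on i) ops ->
  0 < count (split_resp i is_stop) ops + count (split_resp i is_right) ops.
Proof.
move=> range called; have := left_le range.
by rewrite (split_count_by_response i all_ops_answered) in called *; lia.
Qed.

(* Upward induction: a win at T_(j+1) would need a caller of T_j. *)
Lemma no_tas j : 0 < j <= ell -> count (is_tas_on j) ops = 0.
Proof.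
elim: j => [//|j IH] range; case: (posnP (count (is_tas_on j.+1) ops)) => // called.
have := tas_completes range called; case: j IH range {called} => [|j] IH range.
- by rewrite no_win_T1.
- by have := win_le_tas j; rewrite IH; lia.
Qed.

Lemma split_quiet i : 0 < i <= ell -> (i < ell -> count (is_split_on i.+1) ops = 0) ->
  count (is_split_on i) ops = 0.
Proof.
move=> range next_quiet; case: (posnP (count (is_split_on i) ops)) => // called.
have := split_progress range called.
have -> : count (split_resp i is_stop) ops = 0.
  by apply/eqP; rewrite -leqn0 -(no_tas range); apply: stop_le_tas.
have -> // : count (split_resp i is_right) ops = 0.
case: (ltngtP i ell) => [lt|gt|->]; [|lia|exact: no_right_last].
apply/eqP; rewrite -leqn0 -(next_quiet lt); apply: right_le_next.
by rewrite lt andbT; case/andP: range.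
Qed.

Lemma no_split i : 0 < i <= ell -> count (is_split_on i) ops = 0.
Proof.
suff bound d : forall i, 0 < i <= ell -> ell <= i + d -> count (is_split_on i) ops = 0.
  by move=> range; apply: (bound ell) range _; rewrite leq_addl.
elim: d => [|d IH] {}i range lt; apply: split_quiet range _ => i_lt; first lia.
by apply: IH; lia.
Qed.

End AllLose.

Lemma some_survivor :
  (exists p, accesses run p) -> exists p, accesses run p /\ ~~ loses ell (run p).
Proof.
move=> [p0 acc0]; case: (boolP [exists p, accesses run p && ~~ loses ell (run p)]).
  by case/existsP => p /andP[acc survives]; exists p.
rewrite negb_exists => /forallP everyone_loses.
have all_lose p : accesses run p -> exec ell (AtSplit 1) (run p) = Some (Done Lose).
  by move=> acc; apply: final_isE; have := everyone_loses p; rewrite acc negbK.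
have := exec_first_split (@conforming p0) acc0; rewrite has_count.
move=> /leq_trans/(_ (count_run_le _ p0)).
by rewrite (no_split all_lose) // ell_gt0.
Qed.

End Execution.

Theorem lemma7 (P : finType) (ell : nat) (run : P -> seq op) :
  0 < ell ->
  valid_execution ell run ->
  [/\ #|[pred p | wins ell (run p)]| <= 1,
      (exists p, accesses run p) ->
        (forall p, accesses run p -> completes ell (run p)) ->
        exists p, accesses run p /\ ~~ loses ell (run p) &
      #|[pred p | accesses run p]| <= ell ->
        (forall p j, visits (run p) j -> j <= #|[pred p | accesses run p]|) /\
        (forall p, ~~ falls_off ell (run p))].
Proof.
move=> ell_gt0 [conforming _ _ splitters tas_objects]; split.
- exact: winners_le1 ell_gt0 conforming splitters tas_objects.
- move=> accessed _; exact: some_survivor ell_gt0 conforming splitters tas_objects accessed.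
- move=> few; split=> [p j|p].
  + exact: visits_le_accessors ell_gt0 conforming splitters p j.
  + exact: no_falloff ell_gt0 conforming splitters p few.
Qed.
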